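(* Let $(X,d)$ be a complete metric space and $I:X\to(-\infty,0]$ a function of Baire class 1. Let $X_0$ be a nonempty dense subset of $X$ with the following property: for every $\beta<0$ there exists $\alpha(\beta)>0$ such that for every $x\in X_0$ with $I(x)<\beta$ there exists a sequence $\{x_n\}\subseteq X_0$ with $x_n\to x$ in $(X,d)$ and $\liminf_{n\to\infty}I(x_n)\ge I(x)+\alpha(\beta)$. Then there exists a residual set $S\subseteq X$ such that $I(x)=0$ for all $x\in S$.
   Context: A function is of Baire class 1 if it is a pointwise limit of a sequence of continuous functions. A set is residual if its complement is of first category (a countable union of nowhere dense sets). *)

From Stdlib Require Export Reals.
Open Scope R_scope.

Section MetricDefs.
Variable M : Metric_Space.
Local Notation X := (Base M).
Local Notation d := (dist M).

Definition seq_cv (x : nat -> X) (l : X) : Prop :=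
  forall eps : R, eps > 0 -> exists N : nat, forall n : nat, (n >= N)%nat -> d (x n) l < eps.

Definition seq_Cauchy (x : nat -> X) : Prop :=
  forall eps : R, eps > 0 -> exists N : nat,
    forall n m : nat, (n >= N)%nat -> (m >= N)%nat -> d (x n) (x m) < eps.

Definition complete : Prop :=
  forall x : nat -> X, seq_Cauchy x -> exists l : X, seq_cv x l.

Definition continuous_on_X (f : X -> R) : Prop :=
  forall x : X, forall eps : R, eps > 0 -> exists delta : R, delta > 0 /\
    forall y : X, d x y < delta -> Rabs (f y - f x) < eps.

Definition baire_class1 (f : X -> R) : Prop :=
  exists g : nat -> X -> R,
    (forall n, continuous_on_X (g n)) /\
    (forall x : X, Un_cv (fun n => g n x) (f x)).

Definition closure (A : X -> Prop) : X -> Prop :=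
  fun x => forall eps : R, eps > 0 -> exists y : X, A y /\ d x y < eps.

Definition interior (A : X -> Prop) : X -> Prop :=
  fun x => exists eps : R, eps > 0 /\ forall y : X, d x y < eps -> A y.

Definition dense (A : X -> Prop) : Prop := forall x : X, closure A x.

Definition nowhere_dense (A : X -> Prop) : Prop :=
  forall x : X, ~ interior (closure A) x.

Definition first_category (A : X -> Prop) : Prop :=
  exists B : nat -> X -> Prop,
    (forall n, nowhere_dense (B n)) /\
    (forall x : X, A x <-> exists n, B n x).

Definition residual (S : X -> Prop) : Prop :=
  first_category (fun x => ~ S x).

End MetricDefs.

(* liminf_{n->oo} u n >= c  (liminf taken in the extended reals) *)
Definition liminf_ge (u : nat -> R) (c : R) : Prop :=
  forall c' : R, c' < c -> exists N : nat, forall n : nat, (n >= N)%nat -> u n > c'.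

From Pilot Require Import Defs.
From Stdlib Require Import Reals Lra Lia Cantor SplitAbsolu.
Open Scope R_scope.

(* Write I = lim g_m with g_m continuous and let F(e,n) be the closed set where
   |g_m - g_k| <= e for all m, k >= n.  Every x lies in some F(e,n), and on the
   interior of F(e,n) the function I oscillates by less than 3e.  A point x with
   I x < 0 cannot lie in such an interior for small e: density of X0 gives a
   point y of X0 near x with I y close to I x, and the jump hypothesis then gives
   points near y, hence near x, where I is at least I y + alpha.  So {I < 0} is
   covered by the sets F(e,n) \ int F(e,n), which are nowhere dense because
   F(e,n) is closed. *)

Lemma Rabs_lim_sub_le (u : nat -> R) (l e : R) (n : nat) :
  Un_cv u l -> (forall m, (m >= n)%nat -> Rabs (u m - u n) <= e) ->
  Rabs (l - u n) <= e.
Proof.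
  intros Hu Hn. apply Rnot_lt_le; intro Hlt.
  destruct (Hu (Rabs (l - u n) - e) ltac:(lra)) as [N HN].
  specialize (HN (max N n) ltac:(lia)). specialize (Hn (max N n) ltac:(lia)).
  unfold R_dist in HN. split_Rabs; lra.
Qed.

Section CategoryInMetricSpace.
Variable M : Metric_Space.
Local Notation X := (Base M).
Local Notation d := (dist M).

Lemma dist_self (x : X) : d x x = 0.
Proof. now apply dist_refl. Qed.

Definition is_closed (F : X -> Prop) : Prop := forall x, Defs.closure M F x -> F x.

(* For closed F this is the topological boundary of F. *)
Definition boundary (F : X -> Prop) (x : X) : Prop := F x /\ ~ Defs.interior M F x.

Lemma nowhere_dense_boundary (F : X -> Prop) :
  is_closed F -> nowhere_dense M (boundary F).
Proof.
  intros HF x [r [Hr Hball]].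
  assert (Hx : Defs.closure M (boundary F) x).
  { apply Hball. rewrite dist_self; lra. }
  destruct (Hx r Hr) as [y [[Fy Ny] Hxy]].
  apply Ny. exists (r - d x y). split; [lra |].
  intros z Hz. apply HF. intros eps Heps.
  assert (Hxz : d x z < r).
  { pose proof (dist_tri M x z y). pose proof (dist_sym M z y). lra. }
  destruct (Hball z Hxz eps Heps) as [w [[Fw _] Hw]].
  now exists w.
Qed.

Lemma nowhere_dense_subset (A B : X -> Prop) :
  (forall x, A x -> B x) -> nowhere_dense M B -> nowhere_dense M A.
Proof.
  intros HAB HB x [r [Hr Hball]]. apply (HB x). exists r. split; [exact Hr |].
  intros y Hy eps Heps. destruct (Hball y Hy eps Heps) as [w [Aw Hw]].
  exists w. auto.
Qed.

Lemma first_category_of_cover (A : X -> Prop) (B : nat -> nat -> X -> Prop) :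
  (forall j n, nowhere_dense M (B j n)) ->
  (forall x, A x -> exists j n, B j n x) -> first_category M A.
Proof.
  intros HB Hcov.
  exists (fun N x => B (fst (of_nat N)) (snd (of_nat N)) x /\ A x). split.
  - intro N. apply (nowhere_dense_subset _ _ (fun x Hx => proj1 Hx)), HB.
  - intro x. split; [| now intros [N [_ Ax]]].
    intro Ax. destruct (Hcov x Ax) as [j [n Hjn]].
    exists (to_nat (j, n)). rewrite cancel_of_to. now split.
Qed.

Section PointwiseLimit.
Variables (g : nat -> X -> R) (I : X -> R).
Hypothesis g_continuous : forall m, continuous_on_X M (g m).
Hypothesis g_cv : forall x, Un_cv (fun m => g m x) (I x).

Definition cauchy_set (e : R) (n : nat) (x : X) : Prop :=
  forall m k, (m >= n)%nat -> (k >= n)%nat -> Rabs (g m x - g k x) <= e.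

Lemma cauchy_set_closed (e : R) (n : nat) : is_closed (cauchy_set e n).
Proof.
  intros x Hx m k Hm Hk. apply Rnot_lt_le; intro Hlt.
  set (eta := (Rabs (g m x - g k x) - e) / 2).
  destruct (g_continuous m x eta ltac:(unfold eta; lra)) as [d1 [Hd1 H1]].
  destruct (g_continuous k x eta ltac:(unfold eta; lra)) as [d2 [Hd2 H2]].
  destruct (Hx (Rmin d1 d2) (Rmin_pos _ _ Hd1 Hd2)) as [y [Fy Hy]].
  specialize (H1 y (Rlt_le_trans _ _ _ Hy (Rmin_l _ _))).
  specialize (H2 y (Rlt_le_trans _ _ _ Hy (Rmin_r _ _))).
  specialize (Fy m k Hm Hk).
  unfold eta in *. split_Rabs; lra.
Qed.

Lemma in_cauchy_set (e : R) (x : X) : e > 0 -> exists n, cauchy_set e n x.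
Proof.
  intro He. destruct (g_cv x (e / 2) ltac:(lra)) as [n Hn].
  exists n. intros m k Hm Hk.
  specialize (Hn m Hm) as Hm'. specialize (Hn k Hk).
  unfold R_dist in *. split_Rabs; lra.
Qed.

Lemma cauchy_set_lim_close (e : R) (n : nat) (x : X) :
  cauchy_set e n x -> Rabs (I x - g n x) <= e.
Proof.
  intro Hx. apply (Rabs_lim_sub_le (fun m => g m x)); [apply g_cv |].
  intros m Hm. apply Hx; lia.
Qed.

Lemma interior_cauchy_set_oscillation (e : R) (n : nat) (x : X) :
  e > 0 -> Defs.interior M (cauchy_set e n) x ->
  exists rho, rho > 0 /\ forall y, d x y < rho -> Rabs (I y - I x) < 3 * e.
Proof.
  intros He [r [Hr Hball]].
  destruct (g_continuous n x e He) as [delta [Hdelta Hcont]].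
  exists (Rmin r delta). split; [now apply Rmin_pos |].
  intros y Hy.
  pose proof (cauchy_set_lim_close e n y (Hball y (Rlt_le_trans _ _ _ Hy (Rmin_l _ _)))) as Hgy.
  pose proof (cauchy_set_lim_close e n x (Hball x ltac:(rewrite dist_self; lra))) as Hgx.
  pose proof (Hcont y (Rlt_le_trans _ _ _ Hy (Rmin_r _ _))) as Hgxy.
  split_Rabs; lra.
Qed.

End PointwiseLimit.

Section JumpProperty.
Variables (I : X -> R) (X0 : X -> Prop) (beta alpha : R).
Hypothesis X0_dense : dense M X0.
Hypothesis jump : forall y, X0 y -> I y < beta ->
  exists ys : nat -> X,
    (forall n, X0 (ys n)) /\ seq_cv M ys y /\ liminf_ge (fun n => I (ys n)) (I y + alpha).

Lemma jump_large_oscillation (x : X) (e rho : R) :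
  rho > 0 -> I x + e <= beta -> 2 * e <= alpha ->
  ~ (forall y, d x y < rho -> Rabs (I y - I x) < e).
Proof.
  intros Hrho Hbeta Halpha Hosc.
  destruct (X0_dense x rho Hrho) as [y [X0y Hxy]].
  pose proof (Hosc y Hxy) as Hy.
  destruct (jump y X0y ltac:(split_Rabs; lra)) as [ys [_ [Hcv Hliminf]]].
  destruct (Hcv (rho - d x y) ltac:(lra)) as [N1 HN1].
  destruct (Hliminf (I x + e) ltac:(split_Rabs; lra)) as [N2 HN2].
  set (z := ys (max N1 N2)).
  assert (Hyz : d z y < rho - d x y) by exact (HN1 (max N1 N2) ltac:(lia)).
  assert (Hz : I z > I x + e) by exact (HN2 (max N1 N2) ltac:(lia)).
  assert (Hxz : d x z < rho).
  { pose proof (dist_tri M x z y). rewrite (dist_sym M z y) in Hyz. lra. }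
  pose proof (Hosc z Hxz). split_Rabs; lra.
Qed.

End JumpProperty.

End CategoryInMetricSpace.

Theorem lemma4p2 (M : Metric_Space) (I : Base M -> R) (X0 : Base M -> Prop) :
  complete M ->
  (forall x : Base M, I x <= 0) ->
  baire_class1 M I ->
  (exists x0 : Base M, X0 x0) ->
  dense M X0 ->
  (forall beta : R, beta < 0 ->
     exists alpha : R, alpha > 0 /\
       forall x : Base M, X0 x -> I x < beta ->
         exists xs : nat -> Base M,
           (forall n, X0 (xs n)) /\ seq_cv M xs x /\
           liminf_ge (fun n => I (xs n)) (I x + alpha)) ->
  exists S : Base M -> Prop, residual M S /\ forall x : Base M, S x -> I x = 0.
Proof.
  intros _ I_le0 [g [g_continuous g_cv]] _ X0_dense jump.
  exists (fun x => I x = 0). split; [| auto].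
  apply (first_category_of_cover M _ (fun j n => boundary M (cauchy_set M g (/ INR j) n))).
  { intros j n. apply nowhere_dense_boundary, cauchy_set_closed, g_continuous. }
  intros x Ix_ne0.
  assert (Ix_lt0 : I x < 0) by (pose proof (I_le0 x); lra).
  destruct (jump (I x / 2) ltac:(lra)) as [alpha [Halpha jump_x]].
  destruct (archimed_cor1 (Rmin alpha (- I x) / 6)) as [j [Hj Hj0]].
  { pose proof (Rmin_pos alpha (- I x) Halpha ltac:(lra)). lra. }
  assert (He : / INR j > 0) by (apply Rinv_0_lt_compat, lt_0_INR; lia).
  pose proof (Rmin_l alpha (- I x)). pose proof (Rmin_r alpha (- I x)).
  destruct (in_cauchy_set M g I g_cv (/ INR j) x He) as [n Hn].
  exists j, n. split; [exact Hn |]. intro Hint.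
  destruct (interior_cauchy_set_oscillation M g I g_continuous g_cv _ _ _ He Hint)
    as [rho [Hrho Hosc]].
  exact (jump_large_oscillation M I X0 _ alpha X0_dense jump_x x (3 * / INR j) rho
           Hrho ltac:(lra) ltac:(lra) Hosc).
Qed.
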